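(* Let $\mathcal X,\mathcal U$ be finite nonempty sets, $f:\mathcal X\times\mathcal U\to\mathcal X$, $\ell,g:\mathcal X\to\mathbb R$ and $\gamma\in(0,1)$. For a stochastic policy $\pi:\mathcal X\to\Delta(\mathcal U)$ let $\tilde V^{\gamma,\pi}_{\mathrm{RA}}:\mathcal X\to\mathbb R$ be the unique solution of $$\tilde V^{\gamma,\pi}_{\mathrm{RA}}(x)=(1-\gamma)\min\{\ell(x),g(x)\}+\gamma\,\mathbb E_{u\sim\pi(x)}\Big[\min\big\{\max\{\tilde V^{\gamma,\pi}_{\mathrm{RA}}(f(x,u)),\ell(x)\},g(x)\big\}\Big],$$ and let $V^{\gamma,*}_{\mathrm{RA}}:\mathcal X\to\mathbb R$ be the unique solution of $$V^{\gamma,*}_{\mathrm{RA}}(x)=(1-\gamma)\min\{\ell(x),g(x)\}+\gamma\min\Big\{\max\big\{\max_{u\in\mathcal U}V^{\gamma,*}_{\mathrm{RA}}(f(x,u)),\ell(x)\big\},g(x)\Big\}.$$ Then $\tilde V^{\gamma,\pi}_{\mathrm{RA}}\le V^{\gamma,*}_{\mathrm{RA}}$ pointwise for every stochastic policy $\pi$, and there exists a stochastic policy $\pi^*:\mathcal X\to\Delta(\mathcal U)$ with $\tilde V^{\gamma,\pi^*}_{\mathrm{RA}}=V^{\gamma,*}_{\mathrm{RA}}$.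
   Context: $\Delta(\mathcal U)$ denotes the set of probability distributions on $\mathcal U$. Both fixed-point equations are defined by $\gamma$-contractive operators on real functions on $\mathcal X$, so their solutions exist and are unique. *)

From HB Require Import structures.
From mathcomp Require Import all_boot all_order all_algebra.
From mathcomp Require Import reals.
From Stdlib Require Import ClassicalEpsilon.
Set Implicit Arguments. Unset Strict Implicit. Unset Printing Implicit Defensive.
Import Order.TTheory GRing.Theory Num.Theory.
Local Open Scope ring_scope.

Section RA.
Variables (R : realType) (X U : finType).

Definition is_dist (p : {ffun U -> R}) : Prop :=
  (forall u, 0 <= p u) /\ \sum_(u : U) p u = 1.

Definition stoch_policy (pi : X -> {ffun U -> R}) : Prop :=
  forall x, is_dist (pi x).

(* max over the (nonempty) finite set U; the default 0 is only used if U is empty *)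
Definition maxU (h : U -> R) : R :=
  match [pick u : U] with
  | Some u0 => \big[Num.max/h u0]_(u : U) h u
  | None => 0
  end.

Variables (f : X -> U -> X) (l g : X -> R) (gamma : R).

Definition RA_policy_eq (pi : X -> {ffun U -> R}) (V : X -> R) : Prop :=
  forall x, V x = (1 - gamma) * Num.min (l x) (g x)
    + gamma * \sum_(u : U) pi x u * Num.min (Num.max (V (f x u)) (l x)) (g x).

Definition RA_opt_eq (V : X -> R) : Prop :=
  forall x, V x = (1 - gamma) * Num.min (l x) (g x)
    + gamma * Num.min (Num.max (maxU (fun u => V (f x u))) (l x)) (g x).

(* "the unique solution": chosen by Hilbert's epsilon; it is the unique
   solution whenever one exists uniquely (gamma-contraction). *)
Definition V_RA_pi (pi : X -> {ffun U -> R}) : X -> R :=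
  epsilon (inhabits (fun _ => 0)) (RA_policy_eq pi).

Definition V_RA_star : X -> R :=
  epsilon (inhabits (fun _ => 0)) RA_opt_eq.

End RA.

From mathcomp Require Import all_boot all_order all_algebra.
From mathcomp Require Import boolp classical_sets reals.
From mathcomp Require Import lra.
From Stdlib Require Import ClassicalEpsilon.
Import Order.TTheory GRing.Theory Num.Theory.
Local Open Scope ring_scope.
Local Open Scope classical_set_scope.
Set Implicit Arguments. Unset Strict Implicit. Unset Printing Implicit Defensive.

(* Both Bellman operators are monotone and satisfy T (V + c) <= T V + gamma c
   for constants c >= 0, because averaging over pi(x) and maximising over U
   both commute with adding constants.  This gives a comparison principle
   (every subsolution lies below every supersolution), hence unique fixed
   points, which exist as the pointwise supremum of all subsolutions.
   Averaging never exceeds maximising, so the value of any policy is a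
   subsolution of the optimal equation and lies below V*.  The deterministic
   policy picking at x a maximiser of u |-> min{max{V*(f(x,u)), l(x)}, g(x)}
   has V* as a solution of its policy equation, so its value is V*. *)

Section ShiftContraction.
Variables (R : realType) (X : finType) (T : (X -> R) -> X -> R).
Hypothesis T_mono : forall V W, (forall x, V x <= W x) -> forall x, T V x <= T W x.

(* Knaster-Tarski: the pointwise supremum of all subsolutions is a fixed point. *)
Lemma exists_fixpoint (B V0 : X -> R) :
  (forall V x, T V x <= B x) -> (forall x, V0 x <= T V0 x) ->
  exists V, forall x, V x = T V x.
Proof.
move=> TB V0_sub.
pose E x : set R := [set V x | V in [set V | forall y, V y <= T V y]].
pose Vsup x := sup (E x).
have E0 x : E x (V0 x) by exists V0.
have supE x : has_sup (E x).
  split; first by exists (V0 x).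
  by exists (B x) => _ [V V_sub <-]; exact: le_trans (V_sub x) (TB V x).
have le_Vsup V : (forall y, V y <= T V y) -> forall x, V x <= Vsup x.
  by move=> V_sub x; apply: sup_upper_bound => //; exists V.
have Vsup_sub x : Vsup x <= T Vsup x.
  apply: ge_sup; first by exists (V0 x).
  by move=> _ [V V_sub <-]; apply: le_trans (V_sub x) _; apply: T_mono; exact: le_Vsup.
have Vsup_super x : T Vsup x <= Vsup x.
  by apply: le_Vsup => y; apply: T_mono; exact: Vsup_sub.
by exists Vsup => x; apply: le_anti; rewrite Vsup_sub Vsup_super.
Qed.

Variable gamma : R.
Hypotheses (gamma_ge0 : 0 <= gamma) (gamma_lt1 : gamma < 1).
Hypothesis T_shift :
  forall V c, 0 <= c -> forall x, T (fun y => V y + c) x <= T V x + gamma * c.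

Lemma subsolution_le_supersolution V W :
  (forall x, V x <= T V x) -> (forall x, T W x <= W x) -> forall x, V x <= W x.
Proof.
(* The largest excess c of V over W satisfies c <= gamma c, hence c = 0. *)
move=> V_sub W_super.
pose c := \big[Num.max/0]_y (V y - W y).
have c_ge0 : 0 <= c := bigmax_ge_id _ _ _ _.
have le_c y : V y - W y <= c := le_bigmax _ _ y.
have le_gamma_c y : V y - W y <= gamma * c.
  have : V y <= T (fun z => W z + c) y.
    by apply: le_trans (V_sub y) _; apply: T_mono => z; have := le_c z; lra.
  by have := T_shift W c_ge0 y; have := W_super y; lra.
have c_le0 : c <= 0.
  have c_le : c <= gamma * c by apply: bigmax_le => //; apply: mulr_ge0.
  by rewrite -(pmulr_rle0 _ (_ : 0 < 1 - gamma)) ?subr_gt0 // mulrBl mul1r subr_le0.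
by move=> x; have := le_c x; lra.
Qed.

Lemma fixpoint_unique V W :
  (forall x, V x = T V x) -> (forall x, W x = T W x) -> V = W.
Proof.
move=> V_fix W_fix; apply: funext => x; apply: le_anti.
by rewrite !subsolution_le_supersolution // => y; rewrite -?V_fix -?W_fix.
Qed.

End ShiftContraction.

Section Clip.
Variable R : realDomainType.

Definition clip (lo hi a : R) : R := Num.min (Num.max a lo) hi.

Lemma le_clip lo hi a b : a <= b -> clip lo hi a <= clip lo hi b.
Proof. by move=> ab; rewrite le_min2 ?le_max2. Qed.

Lemma clip_addr_le lo hi a c : 0 <= c -> clip lo hi (a + c) <= clip lo hi a + c.
Proof. by move=> c_ge0; rewrite /clip addr_minl addr_maxl le_min2 ?le_max2 ?lerDl. Qed.

Lemma clip_le_hi lo hi a : clip lo hi a <= hi.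
Proof. by rewrite /clip ge_min lexx orbT. Qed.

Lemma min_le_clip lo hi a : Num.min lo hi <= clip lo hi a.
Proof. by rewrite le_min2 // le_max lexx orbT. Qed.

End Clip.

Section Niveloid.
Variables (R : realType) (U : finType).

Definition niveloid (A : (U -> R) -> R) : Prop :=
  [/\ forall h k, (forall u, h u <= k u) -> A h <= A k,
      forall h c, A (fun u => h u + c) = A h + c
    & A (fun _ => 0) = 0].

Lemma niveloid_cst A c : niveloid A -> A (fun _ => c) = c.
Proof. by case=> _ A_add A0; have := A_add (fun _ => 0) c; rewrite A0 !add0r. Qed.

Lemma maxU_ub (h : U -> R) u : h u <= maxU h.
Proof. by rewrite /maxU; case: pickP => [u0 _|/(_ u)//]; exact: le_bigmax. Qed.

Lemma maxU_eq (h : U -> R) u : (forall v, h v <= h u) -> maxU h = h u.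
Proof.
move=> h_le; apply: le_anti; rewrite maxU_ub andbT /maxU.
by case: pickP => [u0 _|/(_ u)//]; apply: bigmax_le => [|v _]; exact: h_le.
Qed.

Lemma maxU_arg_max (u0 : U) (h : U -> R) : maxU h = h [arg max_(u > u0) h u]%O.
Proof. by case: arg_maxP => // u _ h_le; apply: maxU_eq => v; apply: h_le. Qed.

Lemma maxU_niveloid : (0 < #|U|)%N -> niveloid (@maxU R U).
Proof.
case/card_gt0P => u0 _; split.
- by move=> h k hk; rewrite (maxU_arg_max u0 h); apply: le_trans (hk _) (maxU_ub _ _).
- move=> h c; rewrite (maxU_arg_max u0 h); apply: maxU_eq => v.
  by rewrite lerD2r; case: arg_maxP => // u _; apply.
- by apply: (maxU_eq (u := u0)).
Qed.

Lemma maxU_homo (phi : R -> R) (h : U -> R) : (0 < #|U|)%N ->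
  {homo phi : a b / a <= b} -> maxU (fun u => phi (h u)) = phi (maxU h).
Proof.
case/card_gt0P => u0 _ phi_homo; rewrite (maxU_arg_max u0 h); apply: maxU_eq => v.
by apply: phi_homo; case: arg_maxP => // u _; apply.
Qed.

Lemma niveloid_le_maxU A h : niveloid A -> A h <= maxU h.
Proof.
move=> A_niv; rewrite -(niveloid_cst (maxU h) A_niv).
by case: A_niv => A_mono _ _; apply: A_mono => u; exact: maxU_ub.
Qed.

Definition expect (p : {ffun U -> R}) (h : U -> R) : R := \sum_u p u * h u.

Lemma expect_niveloid p : is_dist p -> niveloid (expect p).
Proof.
case=> p_ge0 p_sum1; split.
- by move=> h k hk; apply: ler_sum => u _; apply: ler_wpM2l.
- move=> h c; rewrite /expect -[c in RHS]mul1r -p_sum1 mulr_suml -big_split.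
  by apply: eq_bigr => u _; rewrite mulrDr.
- by rewrite /expect big1 // => u _; rewrite mulr0.
Qed.

Definition dirac_dist (u : U) : {ffun U -> R} := [ffun v => (v == u)%:R].

Lemma dirac_dist_is_dist u : is_dist (dirac_dist u).
Proof.
split=> [v|]; first by rewrite ffunE ler0n.
rewrite (bigD1 u) //= ffunE eqxx big1 ?addr0 // => v /negbTE v_neq.
by rewrite ffunE v_neq.
Qed.

Lemma expect_dirac u h : expect (dirac_dist u) h = h u.
Proof.
rewrite /expect (bigD1 u) //= ffunE eqxx mul1r big1 ?addr0 // => v /negbTE v_neq.
by rewrite ffunE v_neq mul0r.
Qed.

End Niveloid.

Section Bellman.
Variables (R : realType) (X U : finType) (f : X -> U -> X) (l g : X -> R) (gamma : R).

Definition bellman (A : X -> (U -> R) -> R) (V : X -> R) (x : X) : R :=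
  (1 - gamma) * Num.min (l x) (g x) + gamma * A x (fun u => clip (l x) (g x) (V (f x u))).

Definition greedy (u0 : U) (V : X -> R) (x : X) : U :=
  [arg max_(u > u0) clip (l x) (g x) (V (f x u))]%O.

Lemma bellman_greedy u0 V x :
  bellman (fun x => expect (dirac_dist R (greedy u0 V x))) V x =
  bellman (fun _ => @maxU R U) V x.
Proof. by rewrite /bellman expect_dirac (maxU_arg_max u0). Qed.

Hypotheses (gamma_ge0 : 0 <= gamma) (gamma_le1 : gamma <= 1).

Lemma le_bellman A B V x : (forall h, A x h <= B x h) -> bellman A V x <= bellman B V x.
Proof. by move=> AB; rewrite lerD2l ler_wpM2l. Qed.

Variable A : X -> (U -> R) -> R.
Hypothesis A_niv : forall x, niveloid (A x).

Lemma bellman_mono V W :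
  (forall x, V x <= W x) -> forall x, bellman A V x <= bellman A W x.
Proof.
move=> VW x; rewrite lerD2l ler_wpM2l //.
by case: (A_niv x) => A_mono _ _; apply: A_mono => u; apply: le_clip.
Qed.

Lemma bellman_shift V c : 0 <= c ->
  forall x, bellman A (fun y => V y + c) x <= bellman A V x + gamma * c.
Proof.
move=> c_ge0 x; rewrite /bellman -addrA lerD2l -mulrDr ler_wpM2l //.
case: (A_niv x) => A_mono A_add _; rewrite -A_add.
by apply: A_mono => u; apply: clip_addr_le.
Qed.

Lemma bellman_le V x : bellman A V x <= g x.
Proof.
have clip_le : A x (fun u => clip (l x) (g x) (V (f x u))) <= g x.
  rewrite -{2}(niveloid_cst (g x) (A_niv x)).
  by case: (A_niv x) => A_mono _ _; apply: A_mono => u; apply: clip_le_hi.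
have min_le : Num.min (l x) (g x) <= g x by rewrite ge_min lexx orbT.
have := ler_wpM2l gamma_ge0 clip_le.
have := ler_wpM2l (_ : 0 <= 1 - gamma) min_le; rewrite subr_ge0 => /(_ gamma_le1).
rewrite /bellman; lra.
Qed.

Lemma min_le_bellman V x : Num.min (l x) (g x) <= bellman A V x.
Proof.
have le_clip : Num.min (l x) (g x) <= A x (fun u => clip (l x) (g x) (V (f x u))).
  rewrite -{1}(niveloid_cst (Num.min (l x) (g x)) (A_niv x)).
  by case: (A_niv x) => A_mono _ _; apply: A_mono => u; apply: min_le_clip.
have := ler_wpM2l gamma_ge0 le_clip.
rewrite /bellman; lra.
Qed.

Lemma exists_bellman_fixpoint : exists V, forall x, V x = bellman A V x.
Proof.
apply: (exists_fixpoint bellman_mono (B := g) (V0 := fun y => Num.min (l y) (g y))).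
  exact: bellman_le.
exact: min_le_bellman.
Qed.

End Bellman.

Section ReachAvoid.
Variables (R : realType) (X U : finType) (f : X -> U -> X) (l g : X -> R) (gamma : R).
Hypotheses (hU : (0 < #|U|)%N) (gamma_ge0 : 0 <= gamma) (gamma_lt1 : gamma < 1).

Let gamma_le1 : gamma <= 1. Proof. exact: ltW. Qed.
Let maxU_niv : forall x : X, niveloid (@maxU R U).
Proof. by move=> _; exact: maxU_niveloid. Qed.

Notation Vstar := (V_RA_star f l g gamma).
Notation Tstar := (bellman f l g gamma (fun _ => @maxU R U)).
Notation Tpi pi := (bellman f l g gamma (fun x => expect (pi x))).

(* The optimal equation clips after maximising, [bellman] clips before
   aggregating; the two agree because clipping is monotone. *)
Lemma RA_opt_eq_bellman V : RA_opt_eq f l g gamma V <-> forall x, V x = Tstar V x.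
Proof.
have maxU_clip x : maxU (fun u => clip (l x) (g x) (V (f x u))) =
    clip (l x) (g x) (maxU (fun u => V (f x u))).
  exact/maxU_homo/le_clip.
by split=> V_fix x; rewrite V_fix /bellman maxU_clip.
Qed.

Lemma V_RA_star_fixpoint x : Vstar x = Tstar Vstar x.
Proof.
move: x; apply/RA_opt_eq_bellman; apply: epsilon_spec.
have [V V_fix] := exists_bellman_fixpoint f l g gamma_ge0 gamma_le1 maxU_niv.
by exists V; apply/RA_opt_eq_bellman.
Qed.

Lemma V_RA_pi_fixpoint pi : stoch_policy pi ->
  forall x, V_RA_pi f l g gamma pi x = Tpi pi (V_RA_pi f l g gamma pi) x.
Proof.
move=> pi_dist; apply: (epsilon_spec (inhabits (fun _ => 0)) (RA_policy_eq f l g gamma pi)).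
apply: (exists_bellman_fixpoint f l g gamma_ge0 gamma_le1 (A := fun x => expect (pi x))).
by move=> x; apply: expect_niveloid.
Qed.

Lemma V_RA_pi_le_star pi : stoch_policy pi ->
  forall x, V_RA_pi f l g gamma pi x <= Vstar x.
Proof.
move=> pi_dist; apply: (subsolution_le_supersolution (bellman_mono f l g gamma_ge0 maxU_niv)
  gamma_ge0 gamma_lt1 (bellman_shift f l g gamma_ge0 maxU_niv)) => x.
  rewrite {1}V_RA_pi_fixpoint //; apply: le_bellman => // h.
  exact/niveloid_le_maxU/expect_niveloid.
by rewrite -V_RA_star_fixpoint.
Qed.

Lemma V_RA_pi_greedy u0 :
  V_RA_pi f l g gamma (fun x => dirac_dist R (greedy f l g u0 Vstar x)) = Vstar.
Proof.
have dirac_niv x : niveloid (expect (dirac_dist R (greedy f l g u0 Vstar x))).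
  exact/expect_niveloid/dirac_dist_is_dist.
apply: (fixpoint_unique (bellman_mono f l g gamma_ge0 dirac_niv) gamma_ge0 gamma_lt1
  (bellman_shift f l g gamma_ge0 dirac_niv)).
  by apply: V_RA_pi_fixpoint => x; apply: dirac_dist_is_dist.
by move=> x; rewrite bellman_greedy -V_RA_star_fixpoint.
Qed.

End ReachAvoid.

Theorem mainTheorem17 (R : realType) (X U : finType)
    (hX : (0 < #|X|)%N) (hU : (0 < #|U|)%N)
    (f : X -> U -> X) (l g : X -> R) (gamma : R)
    (hg0 : 0 < gamma) (hg1 : gamma < 1) :
  (forall pi : X -> {ffun U -> R}, stoch_policy pi ->
     forall x, V_RA_pi f l g gamma pi x <= V_RA_star f l g gamma x) /\
  (exists pis : X -> {ffun U -> R}, stoch_policy pis /\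
     V_RA_pi f l g gamma pis = V_RA_star f l g gamma).
Proof.
have gamma_ge0 := ltW hg0.
split; first exact: V_RA_pi_le_star.
have [u0 _] := card_gt0P hU.
exists (fun x => dirac_dist R (greedy f l g u0 (V_RA_star f l g gamma) x)); split.
  by move=> x; apply: dirac_dist_is_dist.
exact: V_RA_pi_greedy.
Qed.
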